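(* For every integer $\Delta \geq 2$ there is a connected graph $G$ with $\Delta(G) = \Delta$ such that $c_V(G) = 2(\Delta-1)$ and $c_E(G) = \Delta$.
   Context: $\Delta(G)$ is the maximum degree. In all games the players alternate turns, cops first; initially the cop player places all cops, then the robber player places the robber on a vertex (several pieces may share a position). In a turn each piece of the moving player may stay or make one move (no obligation to move). The robber always sits on vertices and moves to an adjacent vertex; $v_r$ denotes his current vertex. Vertex version: cops on vertices moving to adjacent vertices; cops win when every neighbor of $v_r$ is occupied by a cop; $c_V(G)$ is the least number of cops that can force a win in finitely many turns. Edge version: cops sit on edges; a cop on edge $e$ may move to any edge sharing an endpoint with $e$; cops win when every edge incident to $v_r$ is occupied; the corresponding number is $c_E(G)$. *)

From mathcomp Require Import all_boot.
Set Implicit Arguments. Unset Strict Implicit. Unset Printing Implicit Defensive.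

(* A finite simple graph is given by a finType T and e : rel T with
   symmetric e and irreflexive e. *)

Definition max_degree (T : finType) (e : rel T) : nat :=
  \max_(v : T) #|[set w | e v w]|.

Definition connected_graph (T : finType) (e : rel T) : Prop :=
  forall x y : T, connect e x y.

(* Generic game: cops occupy positions of type P (valid ones), a cop at p may
   move to any q with mv p q (staying is included in mv);  the robber sits on
   vertices of T and moves along e or stays;  caught c r says that the cops in
   configuration c have won against the robber at r.  The game is won by the
   cops in finitely many turns iff the position is in the inductive attractor. *)
Section Game.
Variables (T P : finType) (e : rel T) (k : nat) (mv : rel P)
          (caught : {ffun 'I_k -> P} -> T -> bool).

Definition cops_step (c c' : {ffun 'I_k -> P}) : bool := [forall i, mv (c i) (c' i)].

Inductive cop_turn : {ffun 'I_k -> P} -> T -> Prop :=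
| CT_caught c r : caught c r -> cop_turn c r
| CT_move c c' r : cops_step c c' -> rob_turn c' r -> cop_turn c r
with rob_turn : {ffun 'I_k -> P} -> T -> Prop :=
| RT_caught c r : caught c r -> rob_turn c r
| RT_move c r : (forall r', (r' == r) || e r r' -> cop_turn c r') -> rob_turn c r.

End Game.

Definition cops_win (T P : finType) (e : rel T) (k : nat) (valid : pred P)
    (mv : rel P) (caught : {ffun 'I_k -> P} -> T -> bool) : Prop :=
  exists c0 : {ffun 'I_k -> P}, [forall i, valid (c0 i)] /\
    forall r0 : T, cop_turn e mv caught c0 r0.

Definition vmove (T : finType) (e : rel T) : rel T := fun x y => (x == y) || e x y.
Definition vcaught (T : finType) (e : rel T) (k : nat)
    (c : {ffun 'I_k -> T}) (r : T) : bool :=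
  [forall w, e r w ==> [exists i, c i == w]].
Definition vertex_cops_win (T : finType) (e : rel T) (k : nat) : Prop :=
  cops_win e (fun _ : T => true) (vmove e) (@vcaught T e k).

Definition is_edge (T : finType) (e : rel T) (A : {set T}) : bool :=
  [exists u, exists v, e u v && (A == [set u; v])].
Definition emove (T : finType) (e : rel T) : rel {set T} :=
  fun A B => is_edge e B && (A :&: B != set0).
Definition ecaught (T : finType) (e : rel T) (k : nat)
    (c : {ffun 'I_k -> {set T}}) (r : T) : bool :=
  [forall w, e r w ==> [exists i, c i == [set r; w]]].
Definition edge_cops_win (T : finType) (e : rel T) (k : nat) : Prop :=
  cops_win e (is_edge e) (emove e) (@ecaught T e k).

Definition cV_is (T : finType) (e : rel T) (m : nat) : Prop :=
  vertex_cops_win e m /\ forall k, k < m -> ~ vertex_cops_win e k.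
Definition cE_is (T : finType) (e : rel T) (m : nat) : Prop :=
  edge_cops_win e m /\ forall k, k < m -> ~ edge_cops_win e k.

From mathcomp Require Import all_boot zify.
Set Implicit Arguments. Unset Strict Implicit. Unset Printing Implicit Defensive.

(* The witness is the tree of depth two in which the root has D children
   (hubs) and every hub has D - 1 leaves, so that all inner vertices have
   degree D.  Cops gathered at the root (2(D-1) of them on vertices, or D on
   the root edges) catch the robber within two moves wherever he starts.
   Conversely, a robber staying put on a vertex of degree D needs D edge cops,
   one per incident edge.  Against vertex cops, surrounding hub j takes D - 1
   cops in branch j (to reach its leaves) while surrounding the root takes
   D - 1 cops outside branch j (to reach the other hubs); with fewer than
   2(D-1) cops a robber on the inner vertices can therefore always step to a
   vertex that the next move of the cops cannot surround. *)

Scheme cop_turn_mut_ind := Induction for cop_turn Sort Prop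
  with rob_turn_mut_ind := Induction for rob_turn Sort Prop.

Section RobberInvariant.
Variables (T P : finType) (e : rel T) (k : nat) (mv : rel P)
          (caught : {ffun 'I_k -> P} -> T -> bool).

Lemma cop_turn_next c c' r :
  cops_step mv c c' -> caught c' r -> cop_turn e mv caught c r.
Proof. by move=> step ca; apply: CT_move step (RT_caught _ _ ca). Qed.

Variable good : {ffun 'I_k -> P} -> T -> Prop.
Hypothesis good_uncaught : forall c r, good c r -> ~~ caught c r.
Hypothesis good_step : forall c c' r, good c r -> cops_step mv c c' ->
  ~~ caught c' r /\ exists2 r', (r' == r) || e r r' & good c' r'.

Lemma good_not_cop_turn c r : cop_turn e mv caught c r -> ~ good c r.
Proof.
move=> ct; apply: (@cop_turn_mut_ind T P e k mv caught (fun c r _ => ~ good c r)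
  (fun c r _ => ~~ caught c r ->
     (exists2 r', (r' == r) || e r r' & good c r') -> False)) ct.
- by move=> c0 r0 ca /good_uncaught; rewrite ca.
- by move=> c0 c1 r0 step _ IH /good_step/(_ step) [].
- by move=> c0 r0 ca; rewrite ca.
- by move=> c0 r0 _ IH _ [r' move_r']; apply: IH.
Qed.

Lemma good_not_cops_win valid :
  (forall c, exists r, good c r) -> ~ cops_win e valid mv caught.
Proof. by move=> good0 [c0 [_ win]]; have [r] := good0 c0; apply: good_not_cop_turn. Qed.

End RobberInvariant.

Arguments cop_turn_next {T P e k mv caught c} c' {r}.

Lemma card_preimC (T : finType) k (c : 'I_k -> T) (S : pred T) :
  #|[set i | S (c i)]| + #|[set i | ~~ S (c i)]| = k.
Proof.
have -> : [set i | ~~ S (c i)] = ~: [set i | S (c i)] by apply/setP => i; rewrite !inE.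
by rewrite cardsC card_ord.
Qed.

Lemma vcaught_cover (T : finType) (e : rel T) k (c : {ffun 'I_k -> T}) r :
  (forall w, e r w -> exists i, c i = w) -> vcaught e c r.
Proof.
move=> cover; apply/forallP => w; apply/implyP => /cover [i <-].
by apply/existsP; exists i.
Qed.

Lemma ecaught_cover (T : finType) (e : rel T) k (c : {ffun 'I_k -> {set T}}) r :
  (forall w, e r w -> exists i, c i = [set r; w]) -> ecaught e c r.
Proof.
move=> cover; apply/forallP => w; apply/implyP => /cover [i ci].
by apply/existsP; exists i; rewrite ci.
Qed.

Lemma ecaught_card (T : finType) (e : rel T) k (c : {ffun 'I_k -> {set T}}) r :
  irreflexive e -> ecaught e c r -> #|[set w | e r w]| <= k.
Proof.
move=> irr /forallP caught_r.
pose other i := odflt r [pick w | c i == [set r; w]].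
rewrite -[k]card_ord -cardsT (leq_trans _ (leq_imset_card other _)) //.
apply: subset_leq_card; apply/subsetP => w; rewrite inE => erw.
have /existsP [i /eqP ci] := implyP (caught_r w) erw.
apply/imsetP; exists i; rewrite ?inE // /other.
case: pickP => [w' /eqP|]; last by move/(_ w); rewrite ci eqxx.
rewrite ci => /setP/(_ w); rewrite !inE eqxx orbT => /esym/orP [/eqP wr|/eqP //].
by move: erw; rewrite wr irr.
Qed.

Lemma max_degree_le_edge_cops (T : finType) (e : rel T) k :
  irreflexive e -> edge_cops_win e k -> max_degree e <= k.
Proof.
move=> irr win; apply/bigmax_leqP => v _; rewrite leqNgt; apply/negP => deg_v.
have uncaught (c : {ffun 'I_k -> {set T}}) : ~~ ecaught e c v.
  by apply/negP => /(ecaught_card irr); rewrite leqNgt deg_v.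
apply: (good_not_cops_win (good := fun _ r => r = v)) win => [c r ->|c c' r -> _|c].
- exact: uncaught.
- by split; [exact: uncaught | exists v; rewrite ?eqxx].
- by exists v.
Qed.

Lemma vcaught_step_card (T : finType) (e : rel T) k (c c' : {ffun 'I_k -> T})
    v (W : {set T}) (S : pred T) :
  cops_step (vmove e) c c' -> vcaught e c' v -> {subset W <= e v} ->
  (forall u w, w \in W -> vmove e u w -> S u) -> #|W| <= #|[set i | S (c i)]|.
Proof.
move=> /forallP step /forallP caught_v sub_W W_from.
apply: leq_trans (leq_imset_card c' _); apply: subset_leq_card.
apply/subsetP => w wW; have /existsP [i /eqP ci] := implyP (caught_v w) (sub_W w wW).
by apply/imsetP; exists i; rewrite // inE (W_from _ w) // -ci.
Qed.

Section DepthTwoTree.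
Variable m : nat.

(* [None] is the root, [Some (j, None)] its [m.+2] children (the hubs) and
   [Some (j, Some l)] the [m.+1] leaves below hub [j]. *)
Definition tree : finType := option ('I_m.+2 * option 'I_m.+1).
Definition tree_root : tree := None.
Definition hub j : tree := Some (j, None).
Definition leaf j l : tree := Some (j, Some l).

Definition tree_adj : rel tree := fun u v =>
  match u, v with
  | None, Some (_, None) | Some (_, None), None => true
  | Some (i, None), Some (j, Some _) | Some (i, Some _), Some (j, None) => i == j
  | _, _ => false
  end.

Lemma tree_adj_sym : symmetric tree_adj.
Proof. by move=> [[i [l|]]|] [[j [l'|]]|] //=; rewrite eq_sym. Qed.

Lemma tree_adj_irr : irreflexive tree_adj.
Proof. by move=> [[i [l|]]|]. Qed.

Lemma tree_connected : connected_graph tree_adj.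
Proof.
have to_root (x : tree) : connect tree_adj x tree_root.
  case: x => [[j [l|]]|] //; last exact: connect1.
  by apply: (@connect_trans _ _ (hub j)); apply: connect1; rewrite /= ?eqxx.
move=> x y; apply: connect_trans (to_root x) _.
by rewrite (sym_connect_sym tree_adj_sym).
Qed.

Lemma hub_inj : injective hub.
Proof. by move=> i j [->]. Qed.

Lemma leaf_inj j : injective (leaf j).
Proof. by move=> l l' [->]. Qed.

Lemma card_nbrs_root : #|[set w | tree_adj tree_root w]| = m.+2.
Proof.
have -> : [set w | tree_adj tree_root w] = [set hub j | j : 'I_m.+2].
  apply/setP => w; rewrite inE; apply/idP/imsetP => [|[j _ ->] //].
  by case: w => [[j [l|]]|] // _; exists j.
by rewrite card_imset ?card_ord //; apply: hub_inj.
Qed.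

Lemma card_nbrs_le v : #|[set w | tree_adj v w]| <= m.+2.
Proof.
case: v => [[j [l|]]|]; last by rewrite card_nbrs_root.
- apply: (@leq_trans #|[set hub j]|); last by rewrite cards1.
  apply: subset_leq_card; apply/subsetP => w; rewrite !inE.
  by case: w => [[i [l'|]]|] //= /eqP ->.
- apply: (@leq_trans #|tree_root |: [set leaf j l | l : 'I_m.+1]|).
    apply: subset_leq_card; apply/subsetP => w; rewrite inE.
    case: w => [[i [l|]]|] //= => [/eqP <-|_]; last exact: setU11.
    by rewrite setU1r // imset_f.
  rewrite cardsU1 card_imset ?card_ord; last exact: leaf_inj.
  exact: (leq_add (leq_b1 _) (leqnn m.+1)).
Qed.

Lemma tree_max_degree : max_degree tree_adj = m.+2.
Proof.
apply/eqP; rewrite eqn_leq; apply/andP; split.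
  by apply/bigmax_leqP => v _; apply: card_nbrs_le.
by rewrite -[X in X <= _]card_nbrs_root (leq_bigmax tree_root).
Qed.

Definition branch j : pred tree := fun u => if u is Some (i, _) then i == j else false.

Definition inner : pred tree := fun u => if u is Some (_, Some _) then false else true.

Definition vsafe k (c : {ffun 'I_k -> tree}) r : bool :=
  [forall c', cops_step (vmove tree_adj) c c' ==> ~~ vcaught tree_adj c' r].

Lemma vsafeN k (c : {ffun 'I_k -> tree}) r : ~~ vsafe c r ->
  exists2 c', cops_step (vmove tree_adj) c c' & vcaught tree_adj c' r.
Proof.
by rewrite negb_forall => /existsP [c']; rewrite negb_imply negbK => /andP []; exists c'.
Qed.

Lemma unsafe_hub_card k (c : {ffun 'I_k -> tree}) j :
  ~~ vsafe c (hub j) -> m.+1 <= #|[set i | branch j (c i)]|.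
Proof.
case/vsafeN => c' step caught.
rewrite -{1}(card_ord m.+1) -(card_imset _ (@leaf_inj j)).
apply: (vcaught_step_card step caught) => [_ /imsetP [l _ ->]|u _ /imsetP [l _ ->]] /=.
  exact: eqxx.
by case: u => [[i [l'|]]|] //; rewrite /vmove /= => /orP [/eqP [->]|].
Qed.

Lemma unsafe_root_card k (c : {ffun 'I_k -> tree}) j :
  ~~ vsafe c tree_root -> m.+1 <= #|[set i | ~~ branch j (c i)]|.
Proof.
case/vsafeN => c' step caught.
have lift_hub_inj : injective (hub \o lift j) by move=> a b /hub_inj/lift_inj.
rewrite -{1}(card_ord m.+1) -(card_imset _ lift_hub_inj).
apply: (vcaught_step_card (S := predC (branch j)) step caught).
  by move=> _ /imsetP [t _ ->].
move=> u _ /imsetP [t _ ->] /=.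
have lift_neq : (lift j t == j) = false by apply/negbTE; rewrite eq_sym neq_lift.
case: u => [[i [l'|]]|] //=; rewrite /vmove /= ?orbF.
  by case/orP => [/eqP [] //|/eqP ->]; rewrite lift_neq.
by move=> /eqP [->]; rewrite lift_neq.
Qed.

Lemma inner_escape k (c : {ffun 'I_k -> tree}) r :
  k < m.+1 + m.+1 -> inner r ->
  exists2 r', (r' == r) || tree_adj r r' & inner r' && vsafe c r'.
Proof.
move=> few; case: r => [[j [l|]]|] // _.
- case: (boolP (vsafe c (hub j))) => [safe_hub|/unsafe_hub_card hub_card].
    by exists (hub j); rewrite ?eqxx.
  exists tree_root => //=; apply: contraT => /(unsafe_root_card j) root_card.
  by have := card_preimC c (branch j); lia.
- have branches_disjoint :
      #|[set i | branch ord_max (c i)]| <= #|[set i | ~~ branch ord0 (c i)]|.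
    apply/subset_leq_card/subsetP => i; rewrite !inE.
    by case: (c i) => [[i' _]|] //= /eqP ->.
  case: (boolP (vsafe c (hub ord0))) => [safe0|/unsafe_hub_card card0].
    by exists (hub ord0).
  case: (boolP (vsafe c (hub ord_max))) => [safe1|/unsafe_hub_card card1].
    by exists (hub ord_max).
  by have := card_preimC c (branch ord0); lia.
Qed.

Lemma tree_vertex_lower k : k < m.+1 + m.+1 -> ~ vertex_cops_win tree_adj k.
Proof.
move=> few; apply: (good_not_cops_win (good := fun c r => inner r && vsafe c r)).
- move=> c r /andP [_ /forallP/(_ c)/implyP]; apply.
  by apply/forallP => i; rewrite /vmove eqxx.
- move=> c c' r /andP [inner_r /forallP/(_ c')/implyP safe_r] step.
  by split; [exact: safe_r | exact: inner_escape].
- by move=> c; have [r' _ good_r'] := inner_escape c few (isT : inner tree_root); exists r'.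
Qed.

Definition at_hub j : {ffun 'I_(m.+1 + m.+1) -> tree} :=
  [ffun i => if split i is inl _ then hub j else tree_root].
Definition leaves_of j : {ffun 'I_(m.+1 + m.+1) -> tree} :=
  [ffun i => if split i is inl l then leaf j l else tree_root].
Definition hubs_around j : {ffun 'I_(m.+1 + m.+1) -> tree} :=
  [ffun i => match split i with inl _ => hub j | inr t => hub (lift j t) end].

Lemma at_hub_catches_leaf j l : vcaught tree_adj (at_hub j) (leaf j l).
Proof.
apply: vcaught_cover => -[[i [l'|]]|] //= /eqP <-.
by exists (lshift _ ord0); rewrite ffunE (unsplitK (inl _)).
Qed.

Lemma leaves_of_catch_hub j : vcaught tree_adj (leaves_of j) (hub j).
Proof.
apply: vcaught_cover => -[[i [l|]]|] //= => [/eqP <-|_].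
  by exists (lshift _ l); rewrite ffunE (unsplitK (inl _)).
by exists (rshift _ ord0); rewrite ffunE (unsplitK (inr _)).
Qed.

Lemma hubs_around_catch_root j : vcaught tree_adj (hubs_around j) tree_root.
Proof.
apply: vcaught_cover => -[[i [l|]]|] //= _.
case: (unliftP j i) => [t ->|->].
  by exists (rshift _ t); rewrite ffunE (unsplitK (inr _)).
by exists (lshift _ ord0); rewrite ffunE (unsplitK (inl _)).
Qed.

Lemma tree_vertex_upper : vertex_cops_win tree_adj (m.+1 + m.+1).
Proof.
exists [ffun=> tree_root]; split=> [|[[j [l|]]|]]; first exact/forallP.
- apply: (cop_turn_next (at_hub j)); last exact: at_hub_catches_leaf.
  by apply/forallP => q; rewrite !ffunE; case: split.
- apply: (CT_move (c' := at_hub j)).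
    by apply/forallP => q; rewrite !ffunE; case: split.
  apply: RT_move => -[[i [l|]]|] /=.
  + by case/orP => [/eqP //|/eqP <-]; apply/CT_caught/at_hub_catches_leaf.
  + rewrite orbF => /eqP [->].
    apply: (cop_turn_next (leaves_of j)); last exact: leaves_of_catch_hub.
    by apply/forallP => q; rewrite !ffunE; case: split => //= l; rewrite /vmove /= eqxx orbT.
  + move=> _; apply: (cop_turn_next (hubs_around j)); last exact: hubs_around_catch_root.
    by apply/forallP => q; rewrite !ffunE; case: split => //=; rewrite /vmove eqxx.
- apply: (cop_turn_next (hubs_around ord0)); last exact: hubs_around_catch_root.
  by apply/forallP => q; rewrite !ffunE; case: split.
Qed.

Definition spoke j : {set tree} := [set tree_root; hub j].
Definition twig j l : {set tree} := [set hub j; leaf j l].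

Lemma spoke_edge j : is_edge tree_adj (spoke j).
Proof. by apply/existsP; exists tree_root; apply/existsP; exists (hub j); rewrite /= eqxx. Qed.

Lemma twig_edge j l : is_edge tree_adj (twig j l).
Proof. by apply/existsP; exists (hub j); apply/existsP; exists (leaf j l); rewrite /= !eqxx. Qed.

Lemma spoke_move_spoke i j : emove tree_adj (spoke i) (spoke j).
Proof. by rewrite /emove spoke_edge; apply/set0Pn; exists tree_root; rewrite !inE eqxx. Qed.

Lemma spoke_move_twig j l : emove tree_adj (spoke j) (twig j l).
Proof. by rewrite /emove twig_edge; apply/set0Pn; exists (hub j); rewrite !inE eqxx orbT. Qed.

Lemma spokes_catch_root : ecaught tree_adj [ffun j => spoke j] tree_root.
Proof. by apply: ecaught_cover => -[[j [l|]]|] //= _; exists j; rewrite ffunE. Qed.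

Lemma tree_edge_upper : edge_cops_win tree_adj m.+2.
Proof.
exists [ffun j => spoke j]; split=> [|[[j [l|]]|]].
- by apply/forallP => q; rewrite ffunE spoke_edge.
- apply: (cop_turn_next [ffun q => if q == j then twig j l else spoke q]).
    apply/forallP => q; rewrite !ffunE.
    by case: eqP => [->|_]; rewrite ?spoke_move_twig ?spoke_move_spoke.
  apply: ecaught_cover => -[[i [l'|]]|] //= /eqP <-.
  by exists j; rewrite ffunE eqxx setUC.
- apply: (CT_move (c' := [ffun=> spoke j])).
    by apply/forallP => q; rewrite !ffunE spoke_move_spoke.
  apply: RT_move => -[[i [l|]]|] /=.
  + case/orP => [/eqP //|/eqP <-].
    apply: (cop_turn_next [ffun=> twig j l]).
      by apply/forallP => q; rewrite !ffunE spoke_move_twig.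
    apply: ecaught_cover => -[[i' [l'|]]|] //= /eqP <-.
    by exists ord0; rewrite ffunE setUC.
  + rewrite orbF => /eqP [->].
    apply: (cop_turn_next [ffun q => if unlift j q is Some l then twig j l else spoke j]).
      apply/forallP => q; rewrite !ffunE.
      by case: unlift => [l|]; rewrite ?spoke_move_twig ?spoke_move_spoke.
    apply: ecaught_cover => -[[i' [l|]]|] //= => [/eqP <-|_].
      by exists (lift j l); rewrite ffunE liftK.
    by exists j; rewrite ffunE unlift_none setUC.
  + move=> _; apply: (cop_turn_next [ffun q => spoke q]); last exact: spokes_catch_root.
    by apply/forallP => q; rewrite !ffunE spoke_move_spoke.
- exact: CT_caught spokes_catch_root.
Qed.

End DepthTwoTree.

Theorem corollary2 (D : nat) (hD : 2 <= D) :
  exists (T : finType) (e : rel T),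
    symmetric e /\ irreflexive e /\ connected_graph e /\ max_degree e = D /\
    cV_is e (2 * (D - 1)) /\ cE_is e D.
Proof.
case: D hD => [|[|m]] // _.
exists (tree m), (@tree_adj m).
have -> : 2 * (m.+2 - 1) = m.+1 + m.+1 by lia.
split; first exact: tree_adj_sym.
split; first exact: tree_adj_irr.
split; first exact: tree_connected.
split; first exact: tree_max_degree.
split; split => [|k few].
- exact: tree_vertex_upper.
- exact: tree_vertex_lower.
- exact: tree_edge_upper.
- move/(max_degree_le_edge_cops (@tree_adj_irr m)).
  by rewrite tree_max_degree leqNgt few.
Qed.
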